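(* Let $d_1,d_2\in\mathbb{N}$ with $2\leq d_1\leq d_2$. Let $\omega_d$ denote the maximally entangled projector on $\mathbb{C}^d\otimes\mathbb{C}^d$ and define on $\mathbb{C}^{d_1}\otimes\mathbb{C}^{d_1}\otimes\mathbb{C}^{d_2}\otimes\mathbb{C}^{d_2}$ (factors labelled $A_1,B_1,A_2,B_2$) \[ Z = (\mathbb{1}-\omega_{d_1})_{A_1B_1}\otimes(\mathbb{1}-\omega_{d_2})_{A_2B_2} + (d_1-1)(d_2+1)\,(\omega_{d_1})_{A_1B_1}\otimes(\omega_{d_2})_{A_2B_2}. \] With respect to the bipartition $A=A_1A_2$, $B=B_1B_2$, $Z$ is positive semidefinite and PPT, its partial transpose $Z^\Gamma$ (transposition on $B_1B_2$) satisfies $\mathrm{SN}(Z^\Gamma)\leq 4$, and hence \[ \mathrm{SN}(Z)-\mathrm{SN}(Z^\Gamma)\geq\lceil d_2/d_1\rceil - 4. \]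
   Context: $\omega_d=\ket{\Omega_d}\bra{\Omega_d}$, $\ket{\Omega_d}=\frac{1}{\sqrt d}\sum_{i=1}^d\ket{i}\otimes\ket{i}$. PPT means the partial transpose (transposition in the computational basis on the $B$ system) is positive semidefinite. The Schmidt rank of $\ket{\psi}\in\mathbb{C}^{d_A}\otimes\mathbb{C}^{d_B}$ is the rank of $\mathrm{tr}_A\ket{\psi}\bra{\psi}$; for a nonzero positive semidefinite $\rho$, $\mathrm{SN}(\rho)$ is the minimum over decompositions $\rho=\sum_ip_i\ket{\psi_i}\bra{\psi_i}$ ($p_i>0$) of the maximal Schmidt rank of the $\ket{\psi_i}$, computed with respect to the bipartition $A:B$. *)

(* Finite-dimensional quantum operators are represented as
   functions on finite index types (computational basis), with scalars in a
   numClosedFieldType C (instantiated with C := R[i], R : realType). *)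
From HB Require Import structures.
From mathcomp Require Import all_boot all_order all_algebra.
From mathcomp Require Import complex.
From mathcomp Require Import reals.
From Stdlib Require Import ClassicalEpsilon.
Set Implicit Arguments. Unset Strict Implicit. Unset Printing Implicit Defensive.
Import Order.TTheory GRing.Theory Num.Theory.
Local Open Scope ring_scope.

Section QDefs.
Variable C : numClosedFieldType.

Definition vec (I : finType) := I -> C.
Definition op (I : finType) := I -> I -> C.

Definition proj (I : finType) (v : vec I) : op I := fun x y => v x * (v y)^*.

Definition idop (I : finType) : op I := fun x y => (x == y)%:R.

Definition addop (I : finType) (X Y : op I) : op I := fun x y => X x y + Y x y.
Definition subop (I : finType) (X Y : op I) : op I := fun x y => X x y - Y x y.
Definition scaleop (I : finType) (c : C) (X : op I) : op I := fun x y => c * X x y.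

Definition kron (I J : finType) (X : op I) (Y : op J) : op (I * J)%type :=
  fun x y => X x.1 y.1 * Y x.2 y.2.

Definition opmx (I : finType) (X : op I) : 'M[C]_#|I| :=
  \matrix_(i, j) X (enum_val i) (enum_val j).

(* positive semidefinite: <v, X v> >= 0 for all v (over C this includes
   hermiticity) *)
Definition psd (I : finType) (X : op I) : Prop :=
  forall v : vec I, 0 <= \sum_x \sum_y (v x)^* * X x y * v y.

Definition Omega (d : nat) : vec ('I_d * 'I_d)%type :=
  fun x => (x.1 == x.2)%:R / sqrtC d%:R.
Arguments Omega : clear implicits.
Definition omega (d : nat) : op ('I_d * 'I_d)%type := proj (Omega d).
Arguments omega : clear implicits.

Definition ptB (IA IB : finType) (X : op (IA * IB)%type) : op (IA * IB)%type :=
  fun x y => X (x.1, y.2) (y.1, x.2).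

Definition PPT (IA IB : finType) (X : op (IA * IB)%type) : Prop := psd (ptB X).

Definition ptrA (IA IB : finType) (X : op (IA * IB)%type) : op IB :=
  fun b b' => \sum_a X (a, b) (a, b').

Definition schmidt_rank (IA IB : finType) (psi : vec (IA * IB)%type) : nat :=
  \rank (opmx (ptrA (proj psi))).

Definition SN_decomp (IA IB : finType) (rho : op (IA * IB)%type) (k : nat) : Prop :=
  exists (n : nat) (p : 'I_n -> C) (psi : 'I_n -> vec (IA * IB)%type),
    [/\ forall i, 0 < p i,
        forall x y, rho x y = \sum_i p i * proj (psi i) x y
      & (\max_(i < n) schmidt_rank (psi i))%N = k].

Definition is_SN (IA IB : finType) (rho : op (IA * IB)%type) (k : nat) : Prop :=
  SN_decomp rho k /\ forall k', SN_decomp rho k' -> (k <= k')%N.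

Definition SN (IA IB : finType) (rho : op (IA * IB)%type) : nat :=
  epsilon (inhabits 0%N) (is_SN rho).

(* regroup an operator on (A1 B1) (A2 B2) to the bipartition (A1 A2) | (B1 B2) *)
Definition regroup (TA1 TB1 TA2 TB2 : finType)
  (X : op ((TA1 * TB1) * (TA2 * TB2))%type) : op ((TA1 * TA2) * (TB1 * TB2))%type :=
  fun x y => X ((x.1.1, x.2.1), (x.1.2, x.2.2)) ((y.1.1, y.2.1), (y.1.2, y.2.2)).

Definition Zop (d1 d2 : nat) : op (('I_d1 * 'I_d2) * ('I_d1 * 'I_d2))%type :=
  regroup (addop (kron (subop (@idop _) (omega d1)) (subop (@idop _) (omega d2)))
                 (scaleop ((d1%:R - 1) * (d2%:R + 1)) (kron (omega d1) (omega d2)))).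

Arguments Zop : clear implicits.
End QDefs.
Arguments Zop : clear implicits.
Arguments omega : clear implicits.
Arguments Omega : clear implicits.

From HB Require Import structures.
From mathcomp Require Import all_boot all_order all_algebra.
From mathcomp Require Import complex reals ring zify.
From Stdlib Require Import ClassicalEpsilon Classical.
Set Implicit Arguments. Unset Strict Implicit. Unset Printing Implicit Defensive.
Import Order.TTheory GRing.Theory Num.Theory.
Local Open Scope ring_scope.
Local Open Scope sesquilinear_scope.

(* Z is a nonnegative combination of products of the projectors [1 - omega]
   and [omega], hence positive semidefinite.  The partial transpose fixes [1]
   and maps [omega_d] to [F_d / d], where [F_d = P_+ - P_-] is the swap
   operator and [P_+], [P_-] are the projectors onto the symmetric and
   antisymmetric subspaces.  So [Z^Gamma] is a combination of the four
   operators [P_(+/-) (x) P_(+/-)], with nonnegative weights since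
   [d1 <= d2]; these are sums of projectors onto products of two vectors
   [|ab> +/- |ba>] of Schmidt rank at most 2, whence PPT and
   [SN(Z^Gamma) <= 4].
   For the lower bound, [Z] vanishes on the vectors [(sum_a |aa>) (x) u] with
   [u] orthogonal to [Omega_d2], hence so does every vector [psi] of a
   decomposition of [Z]: contracting [psi] along the diagonal of [A1 B1]
   gives a multiple of [Omega_d2], nonzero for some [psi].  This contraction
   has Schmidt rank [d2] and is a sum of [d1] blocks of the coefficient
   matrix of [psi], so [d2 <= d1 SR(psi)]. *)

Lemma exists_least_nat (P : nat -> Prop) k :
  P k -> exists m, P m /\ forall k', P k' -> (m <= k')%N.
Proof.
elim/ltn_ind: k => k IH Pk.
have [[k' k'k Pk']|none] := classic (exists2 k', (k' < k)%N & P k').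
  exact: IH Pk'.
exists k; split=> // k' Pk'; rewrite leqNgt; apply/negP => k'k.
by apply: none; exists k'.
Qed.

Lemma enum_val_eq (I : finType) (k : 'I_#|I|) (x : I) :
  (enum_val k == x) = (enum_rank x == k).
Proof. by apply/eqP/eqP => [<-|<-]; rewrite ?enum_valK ?enum_rankK. Qed.

Lemma mxrank_sum (F : fieldType) (T : finType) m n (M : T -> 'M[F]_(m, n)) :
  (\rank (\sum_t M t)%R <= \sum_t \rank (M t))%N.
Proof.
apply: (big_ind2 (fun (A : 'M[F]_(m, n)) k => (\rank A <= k)%N)) => //.
  by rewrite mxrank0.
by move=> A a B b rA rB; apply: leq_trans (mxrank_add A B) (leq_add rA rB).
Qed.

Section QuadraticForms.
Variable C : numClosedFieldType.
Implicit Types I J : finType.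

Lemma sum_pair I J (F : I * J -> C) : \sum_p F p = \sum_i \sum_j F (i, j).
Proof. by rewrite pair_bigA; apply: eq_bigr => -[]. Qed.

Lemma sum_delta I (x : I) (F : I -> C) : \sum_q (x == q)%:R * F q = F x.
Proof.
rewrite (bigD1 x) //= eqxx mul1r big1 ?addr0 // => q /negbTE.
by rewrite eq_sym => ->; rewrite mul0r.
Qed.

Lemma sum_enum_val I (F : I -> C) : \sum_t F t = \sum_(k < #|I|) F (enum_val k).
Proof. by rewrite -(big_enum_val (A := I)); apply: eq_bigl => t; rewrite inE. Qed.

Definition dotv I (v w : vec C I) : C := \sum_x (v x)^* * w x.

Definition qform I (X : op C I) (v : vec C I) : C :=
  \sum_x \sum_y (v x)^* * X x y * v y.

Lemma qform_idop I (v : vec C I) : qform (@idop C I) v = dotv v v.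
Proof.
apply: eq_bigr => x _; under eq_bigr => y _ do rewrite [_ * _%:R]mulrC -mulrA.
exact: sum_delta.
Qed.

Lemma dotvBl I (u v w : vec C I) :
  dotv (fun x => u x - v x) w = dotv u w - dotv v w.
Proof.
by rewrite /dotv -sumrB; apply: eq_bigr => x _; rewrite rmorphB mulrBl.
Qed.

Lemma qform_proj I (w v : vec C I) : qform (proj w) v = dotv v w * (dotv v w)^*.
Proof.
rewrite /qform /dotv rmorph_sum mulr_suml; apply: eq_bigr => x _.
rewrite mulr_sumr; apply: eq_bigr => y _.
by rewrite /proj rmorphM /= conjCK; ring.
Qed.

Lemma qform_sum I (T : finType) (X : op C I) (F : T -> op C I) v :
  (forall x y, X x y = \sum_t F t x y) -> qform X v = \sum_t qform (F t) v.
Proof.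
move=> XE; rewrite /qform.
under eq_bigr => x _ do under eq_bigr => y _ do rewrite XE mulr_sumr mulr_suml.
by under eq_bigr => x _ do rewrite exchange_big; rewrite exchange_big.
Qed.

Lemma qform_add I (X Y : op C I) v : qform (addop X Y) v = qform X v + qform Y v.
Proof.
rewrite /qform -big_split; apply: eq_bigr => x _; rewrite -big_split.
by apply: eq_bigr => y _ /=; rewrite /addop; ring.
Qed.

Lemma qform_sub I (X Y : op C I) v : qform (subop X Y) v = qform X v - qform Y v.
Proof.
rewrite /qform -sumrB; apply: eq_bigr => x _; rewrite -sumrB.
by apply: eq_bigr => y _ /=; rewrite /subop; ring.
Qed.

Lemma qform_scale I c (X : op C I) v : qform (scaleop c X) v = c * qform X v.
Proof.
rewrite /qform mulr_sumr; apply: eq_bigr => x _; rewrite mulr_sumr.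
by apply: eq_bigr => y _ /=; rewrite /scaleop; ring.
Qed.

Lemma qform_decomp I n (p : 'I_n -> C) (psi : 'I_n -> vec C I) (X : op C I) v :
  (forall x y, X x y = \sum_i p i * proj (psi i) x y) ->
  qform X v = \sum_i p i * (dotv v (psi i) * (dotv v (psi i))^*).
Proof.
move=> XE; rewrite (qform_sum (F := fun i => scaleop (p i) (proj (psi i)))) //.
by apply: eq_bigr => i _; rewrite qform_scale qform_proj.
Qed.

Lemma dotv_eq0_of_qform_eq0 I n (p : 'I_n -> C) (psi : 'I_n -> vec C I) X v :
  (forall i, 0 < p i) -> (forall x y, X x y = \sum_i p i * proj (psi i) x y) ->
  qform X v = 0 -> forall i, dotv v (psi i) = 0.
Proof.
move=> p_gt0 XE; rewrite (qform_decomp _ XE) => Xv0 i.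
have /eqP : p i * (dotv v (psi i) * (dotv v (psi i))^*) = 0.
  apply: (psumr_eq0P _ Xv0) => // j _.
  by rewrite mulr_ge0 ?mul_conjC_ge0 // ltW.
by rewrite mulf_eq0 (negbTE (lt0r_neq0 (p_gt0 i))) mul_conjC_eq0 => /eqP.
Qed.

Lemma exists_dotv_neq0 I n (p : 'I_n -> C) (psi : 'I_n -> vec C I) X v :
  (forall x y, X x y = \sum_i p i * proj (psi i) x y) ->
  qform X v != 0 -> exists i, dotv v (psi i) != 0.
Proof.
move=> XE; rewrite (qform_decomp _ XE) => Xv.
apply/existsP; apply: contraR Xv; rewrite negb_exists => /forallP vpsi.
by apply/eqP/big1 => i _; rewrite (eqP (negbNE (vpsi i))) mul0r mulr0.
Qed.

End QuadraticForms.

Section ProjectorDecompositions.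
Variables (C : numClosedFieldType) (I : finType).
Implicit Types (P : vec C I -> Prop) (X Y : op C I).

Definition proj_decomp P X :=
  exists (T : finType) (psi : T -> vec C I),
    (forall t, P (psi t)) /\ forall x y, X x y = \sum_t proj (psi t) x y.

Lemma psd_of_proj_decomp P X : proj_decomp P X -> psd X.
Proof.
move=> [T [psi [_ XE]]] v; rewrite -/(qform X v) (qform_sum _ XE).
by apply: sumr_ge0 => t _; rewrite qform_proj mul_conjC_ge0.
Qed.

Lemma eq_proj_decomp P X Y :
  (forall x y, X x y = Y x y) -> proj_decomp P Y -> proj_decomp P X.
Proof. by move=> XY [T [psi [Ppsi YE]]]; exists T, psi; split=> // x y; rewrite XY. Qed.

Lemma proj_decomp_proj P v : P v -> proj_decomp P (proj v).
Proof.
move=> Pv; exists unit, (fun _ => v); split=> // x y.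
by rewrite big_const card_unit /= addr0.
Qed.

Lemma proj_decomp_add P X Y :
  proj_decomp P X -> proj_decomp P Y -> proj_decomp P (addop X Y).
Proof.
move=> [T1 [psi1 [P1 XE]]] [T2 [psi2 [P2 YE]]].
exists (T1 + T2)%type, (fun t => match t with inl s => psi1 s | inr s => psi2 s end).
by split=> [[]|x y] //; rewrite big_sumType /addop XE YE.
Qed.

Lemma proj_decomp_scale P c X : 0 <= c ->
  (forall v, P v -> P (fun x => sqrtC c * v x)) ->
  proj_decomp P X -> proj_decomp P (scaleop c X).
Proof.
move=> c_ge0 PZ [T [psi [Ppsi XE]]].
exists T, (fun t x => sqrtC c * psi t x); split=> [t|x y]; first exact: PZ.
rewrite /scaleop XE mulr_sumr; apply: eq_bigr => t _.
have sqrtc_real : (sqrtC c)^* = sqrtC c by rewrite geC0_conj ?sqrtC_ge0.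
rewrite /proj rmorphM /= sqrtc_real -[in LHS](sqrtCK c) expr2; ring.
Qed.

End ProjectorDecompositions.

Section SchmidtRank.
Variable C : numClosedFieldType.

Lemma mulmx_trmxC_eq0 m n (M : 'M[C]_(m, n)) : M *m M^t* = 0 -> M = 0.
Proof.
move=> /matrixP MM0; apply/matrixP => i j; rewrite mxE.
have : \sum_k M i k * (M i k)^* = 0.
  transitivity ((M *m M^t*) i i); last by rewrite MM0 mxE.
  by rewrite mxE; apply: eq_bigr => k _; rewrite !mxE.
move/psumr_eq0P => /(_ (fun k _ => mul_conjC_ge0 (M i k)) j isT) /eqP.
by rewrite mul_conjC_eq0 => /eqP.
Qed.

Lemma mxrank_mulmx_trmxC m n (M : 'M[C]_(m, n)) : \rank (M *m M^t*) = \rank M.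
Proof.
apply/eqP; rewrite eqn_leq mxrankM_maxl /=.
set K := kermx (M *m M^t*).
have /mxrankS : (K <= kermx M)%MS.
  apply/sub_kermxP/mulmx_trmxC_eq0.
  by rewrite trmx_mul map_mxM mulmxA -(mulmxA K) mulmx_ker mul0mx.
rewrite !mxrank_ker; have := rank_leq_row M; have := rank_leq_row (M *m M^t*).
lia.
Qed.

Variables IA IB : finType.
Implicit Types (X : op C (IA * IB)%type) (psi : vec C (IA * IB)%type).

(* the columns of [coefmx psi] are indexed by A, so that
   [tr_A |psi><psi| = coefmx psi *m (coefmx psi)^t*] *)
Definition coefmx psi : 'M[C]_(#|IB|, #|IA|) :=
  \matrix_(i, k) psi (enum_val k, enum_val i).

Lemma schmidt_rank_coefmx psi : schmidt_rank psi = \rank (coefmx psi).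
Proof.
rewrite -mxrank_mulmx_trmxC /schmidt_rank; congr mxrank.
apply/matrixP => i j; rewrite !mxE /ptrA sum_enum_val; apply: eq_bigr => k _.
by rewrite !mxE.
Qed.

Definition sum_of_products (R : finType) psi :=
  exists (f : R -> IA -> C) (g : R -> IB -> C),
    forall a b, psi (a, b) = \sum_r f r a * g r b.

Lemma sum_of_products_scale (R : finType) c psi :
  sum_of_products R psi -> sum_of_products R (fun x => c * psi x).
Proof.
move=> [f [g psiE]]; exists (fun r a => c * f r a), g => a b.
by rewrite psiE mulr_sumr; apply: eq_bigr => r _; rewrite mulrA.
Qed.

Lemma schmidt_rank_le_card (R : finType) psi :
  sum_of_products R psi -> (schmidt_rank psi <= #|R|)%N.
Proof.
move=> [f [g psiE]]; rewrite schmidt_rank_coefmx.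
pose G : 'M[C]_(#|IB|, #|R|) := \matrix_(i, r) g (enum_val r) (enum_val i).
pose F : 'M[C]_(#|R|, #|IA|) := \matrix_(r, k) f (enum_val r) (enum_val k).
have -> : coefmx psi = G *m F.
  apply/matrixP => i k; rewrite !mxE psiE sum_enum_val; apply: eq_bigr => r _.
  by rewrite !mxE mulrC.
exact: leq_trans (mxrankM_maxl _ _) (rank_leq_col _).
Qed.

Lemma SN_spec X k : SN_decomp X k -> SN_decomp X (SN X) /\ (SN X <= k)%N.
Proof.
move=> Xk; have [SNX SN_min] : is_SN X (SN X).
  exact: (epsilon_spec (inhabits 0%N) (is_SN X) (exists_least_nat Xk)).
by split=> //; apply: SN_min.
Qed.

Lemma SN_decomp_of_proj_decomp P X K :
  proj_decomp P X -> (forall v, P v -> (schmidt_rank v <= K)%N) ->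
  exists2 k, SN_decomp X k & (k <= K)%N.
Proof.
move=> [T [psi [Ppsi XE]]] PK.
exists (\max_(k < #|T|) schmidt_rank (psi (enum_val k))).
  exists #|T|, (fun _ => 1), (fun k => psi (enum_val k)); split=> // x y.
  by rewrite XE sum_enum_val; apply: eq_bigr => k _; rewrite mul1r.
by apply/bigmax_leqP => k _; apply: PK.
Qed.

Lemma SN_le_of_proj_decomp P X K :
  proj_decomp P X -> (forall v, P v -> (schmidt_rank v <= K)%N) -> (SN X <= K)%N.
Proof.
move=> XP PK; have [k Xk kK] := SN_decomp_of_proj_decomp XP PK.
exact: leq_trans (SN_spec Xk).2 kK.
Qed.

Lemma SN_decomp_SN P X : proj_decomp P X -> SN_decomp X (SN X).
Proof.
move=> XP; have [k Xk _] := SN_decomp_of_proj_decomp XP (fun v _ => rank_leq_row _).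
exact: (SN_spec Xk).1.
Qed.

End SchmidtRank.

Section Tensor.
Variables (C : numClosedFieldType) (TA1 TB1 TA2 TB2 : finType).
Local Notation I1 := (TA1 * TB1)%type.
Local Notation I2 := (TA2 * TB2)%type.
Local Notation I12 := ((TA1 * TA2) * (TB1 * TB2))%type.

Lemma sum_regroup (F : I12 -> C) :
  \sum_x F x = \sum_(z1 : I1) \sum_(z2 : I2) F ((z1.1, z2.1), (z1.2, z2.2)).
Proof.
rewrite [LHS]sum_pair [RHS]sum_pair.
under eq_bigr => a _ do rewrite sum_pair.
rewrite [LHS]sum_pair.
under [RHS]eq_bigr => a1 _ do under eq_bigr => b1 _ do rewrite sum_pair.
by apply: eq_bigr => a1 _; exact: exchange_big.
Qed.

Definition tensorv (u1 : vec C I1) (u2 : vec C I2) : vec C I12 :=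
  fun x => u1 (x.1.1, x.2.1) * u2 (x.1.2, x.2.2).

Lemma qform_regroup_kron (X1 : op C I1) (X2 : op C I2) u1 u2 :
  qform (regroup (kron X1 X2)) (tensorv u1 u2) = qform X1 u1 * qform X2 u2.
Proof.
rewrite /qform sum_regroup.
under eq_bigr => z1 _ do under eq_bigr => z2 _ do rewrite sum_regroup.
rewrite big_distrlr /=.
under [RHS]eq_bigr => z1 _ do under eq_bigr => w1 _ do rewrite big_distrlr /=.
apply: eq_bigr => -[a1 b1] _; apply: eq_bigr => -[a2 b2] _.
apply: eq_bigr => -[c1 e1] _; apply: eq_bigr => -[c2 e2] _.
by rewrite /tensorv /regroup /kron /= rmorphM; ring.
Qed.

Lemma ptB_regroup_kron (X1 : op C I1) (X2 : op C I2) x y :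
  ptB (regroup (kron X1 X2)) x y = regroup (kron (ptB X1) (ptB X2)) x y.
Proof. by case: x y => [[? ?] [? ?]] [[? ?] [? ?]]. Qed.

Lemma proj_decomp_regroup_kron P1 P2 (Q : vec C I12 -> Prop)
    (X1 : op C I1) (X2 : op C I2) :
  (forall u1 u2, P1 u1 -> P2 u2 -> Q (tensorv u1 u2)) ->
  proj_decomp P1 X1 -> proj_decomp P2 X2 -> proj_decomp Q (regroup (kron X1 X2)).
Proof.
move=> PQ [T1 [psi1 [P1psi X1E]]] [T2 [psi2 [P2psi X2E]]].
exists (T1 * T2)%type, (fun t => tensorv (psi1 t.1) (psi2 t.2)); split.
  by move=> t; apply: PQ.
move=> x y; rewrite /regroup /kron /= X1E X2E big_distrlr /= sum_pair.
apply: eq_bigr => s _; apply: eq_bigr => t _.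
by rewrite /proj /tensorv /= rmorphM; ring.
Qed.

Lemma sum_of_products_tensorv (R1 R2 : finType) (u1 : vec C I1) (u2 : vec C I2) :
  sum_of_products R1 u1 -> sum_of_products R2 u2 ->
  sum_of_products (R1 * R2)%type (tensorv u1 u2).
Proof.
move=> [f1 [g1 u1E]] [f2 [g2 u2E]].
exists (fun r a => f1 r.1 a.1 * f2 r.2 a.2), (fun r b => g1 r.1 b.1 * g2 r.2 b.2).
move=> [a1 a2] [b1 b2]; rewrite /tensorv /= u1E u2E big_distrlr sum_pair /=.
by apply: eq_bigr => r _; apply: eq_bigr => s _; ring.
Qed.

End Tensor.

Section Contraction.
Variables (C : numClosedFieldType) (T IA IB : finType).

Definition diagv : vec C (T * T)%type := fun p => (p.1 == p.2)%:R.

Definition contractv (psi : vec C ((T * IA) * (T * IB))%type) : vec C (IA * IB)%type :=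
  fun q => \sum_t psi ((t, q.1), (t, q.2)).

Lemma dotv_tensorv_diagv u psi : dotv (tensorv diagv u) psi = dotv u (contractv psi).
Proof.
rewrite /dotv sum_regroup exchange_big /=; apply: eq_bigr => -[a b] _.
rewrite sum_pair /contractv /= mulr_sumr; apply: eq_bigr => t _.
under eq_bigr => t' _ do rewrite /tensorv /diagv /= rmorphM /= conjC_nat -mulrA.
exact: sum_delta.
Qed.

(* each summand of the contraction is [coefmx psi] cut down to a block *)
Lemma rank_coefmx_contractv psi :
  (\rank (coefmx (contractv psi)) <= #|T| * \rank (coefmx psi))%N.
Proof.
pose L t : 'M[C]_(#|IB|, #|{: T * IB}|) :=
  \matrix_(i, l) (enum_val l == (t, enum_val i))%:R.
pose R t : 'M[C]_(#|{: T * IA}|, #|IA|) :=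
  \matrix_(k, j) (enum_val k == (t, enum_val j))%:R.
have -> : coefmx (contractv psi) = (\sum_t L t *m coefmx psi *m R t)%R.
  apply/matrixP => i j; rewrite !mxE summxE; apply: eq_bigr => t _.
  rewrite mxE (eq_bigr (fun k => (enum_rank (t, enum_val j) == k)%:R *
                                  (L t *m coefmx psi) i k)); last first.
    by move=> k _; rewrite [R t k j]mxE enum_val_eq mulrC.
  rewrite sum_delta mxE.
  rewrite (eq_bigr (fun l => (enum_rank (t, enum_val i) == l)%:R *
                              coefmx psi l (enum_rank (t, enum_val j)))); last first.
    by move=> l _; rewrite [L t i l]mxE enum_val_eq.
  by rewrite sum_delta mxE !enum_rankK.
apply: leq_trans (mxrank_sum _) _; rewrite -sum_nat_const leq_sum // => t _.
exact: leq_trans (mxrankM_maxl _ _) (mxrankM_maxr _ _).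
Qed.

End Contraction.

Section Projectors.
Variables (C : numClosedFieldType) (I : finType).

Definition deltav (q : I) : vec C I := fun p => (p == q)%:R.

Lemma dotv_deltav q (f : vec C I) : dotv (deltav q) f = f q.
Proof.
rewrite /dotv /deltav; under eq_bigr => p _ do rewrite conjC_nat eq_sym.
exact: sum_delta.
Qed.

(* [1 - |w><w|] is a projection, hence the sum of the projectors onto its
   columns [(1 - |w><w|) |q>] *)
Lemma proj_decomp_idop_sub_proj (w : vec C I) :
  dotv w w = 1 -> proj_decomp (fun _ => True) (subop (@idop C I) (proj w)).
Proof.
move=> w_unit.
exists I, (fun q p => (p == q)%:R - w p * (w q)^*); split=> // x y.
have projE q : proj (fun p => (p == q)%:R - w p * (w q)^*) x y =
    (x == q)%:R * (y == q)%:R - (x == q)%:R * ((w y)^* * w q)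
    - (y == q)%:R * (w x * (w q)^*) + w x * (w y)^* * ((w q)^* * w q).
  by rewrite /proj rmorphB /= conjC_nat rmorphM /= conjCK; ring.
rewrite (eq_bigr _ (fun q _ => projE q)) big_split /= !sumrB !sum_delta.
by rewrite -mulr_sumr -/(dotv w w) w_unit /subop /idop /proj eq_sym; ring.
Qed.

(* [symop s e = (1 + e S) / 2] for the permutation matrix [S] of [s]; for
   [e = 1] and [e = -1] these are the projectors onto the [s]-symmetric and
   [s]-antisymmetric vectors *)
Definition symop (s : I -> I) (e : C) : op C I :=
  fun x y => ((x == y)%:R + e * (x == s y)%:R) / 2%:R.

Definition symv (s : I -> I) (e : C) (q : I) : vec C I :=
  fun p => ((p == q)%:R + e * (p == s q)%:R) / 2%:R.

Lemma proj_decomp_symop (s : I -> I) (e : C) :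
  involutive s -> e^* = e -> e * e = 1 ->
  proj_decomp (fun v => exists q, v = symv s e q) (symop s e).
Proof.
move=> sK e_real e_sqr.
exists I, (symv s e); split=> [q|x y]; first by exists q.
have eq_s a b : (a == s b) = (s a == b).
  by apply/eqP/eqP => [->|<-]; rewrite sK.
have projE q : proj (symv s e q) x y =
    ((x == q)%:R * (y == q)%:R + e * ((x == q)%:R * (s y == q)%:R)
    + e * ((s x == q)%:R * (y == q)%:R) + e * e * ((s x == q)%:R * (s y == q)%:R))
    / 4%:R.
  rewrite /proj /symv rmorphM /= rmorphD /= rmorphM /= e_real !conjC_nat.
  by rewrite fmorphV /= conjC_nat !eq_s; field; rewrite ?pnatr_eq0.
rewrite (eq_bigr _ (fun q _ => projE q)) -mulr_suml !big_split /= -!mulr_sumr.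
rewrite !sum_delta /symop e_sqr mul1r (inj_eq (can_inj sK)).
rewrite -eq_s [y == x]eq_sym.
have -> : (y == s x) = (x == s y) by rewrite eq_s eq_sym.
by field; rewrite ?pnatr_eq0.
Qed.

End Projectors.

Lemma ptB_idop (C : numClosedFieldType) (IA IB : finType) x y :
  ptB (@idop C (IA * IB)%type) x y = @idop C _ x y.
Proof.
by case: x y => a b [a' b']; rewrite /ptB /idop /= !xpair_eqE [b' == b]eq_sym.
Qed.

Section MaximallyEntangled.
Variables (C : numClosedFieldType) (d : nat).
Hypothesis d_gt0 : (0 < d)%N.
Local Notation I := ('I_d * 'I_d)%type.

Definition swap (p : I) : I := (p.2, p.1).

Lemma swapK : involutive swap. Proof. by case. Qed.

Let d_neq0 : (d%:R : C) != 0. Proof. by rewrite pnatr_eq0 -lt0n. Qed.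

Let sqrt_d_neq0 : sqrtC (d%:R : C) != 0.
Proof. by rewrite sqrtC_eq0. Qed.

Let sqrt_d_real : (sqrtC (d%:R : C))^* = sqrtC d%:R.
Proof. by rewrite geC0_conj // sqrtC_ge0 ler0n. Qed.

Let sqrt_d_sqr : sqrtC (d%:R : C) * sqrtC d%:R = d%:R.
Proof. by rewrite -expr2 sqrtCK. Qed.

Lemma sum_diagv : \sum_(p : I) @diagv C 'I_d p = d%:R.
Proof.
rewrite sum_pair (eq_bigr (fun _ => 1)) ?sumr_const ?card_ord // => i _.
by rewrite (eq_bigr (fun j => (i == j)%:R * 1)) ?sum_delta // => j _; rewrite mulr1.
Qed.

Lemma dotv_diagv_Omega : dotv (@diagv C 'I_d) (Omega C d) = sqrtC d%:R.
Proof.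
rewrite /dotv (eq_bigr (fun p => @diagv C 'I_d p / sqrtC d%:R)) => [|p _].
  by rewrite -mulr_suml sum_diagv -{1}sqrt_d_sqr mulfK.
by rewrite /diagv /Omega conjC_nat; case: (_ == _); rewrite ?mul0r ?mul1r.
Qed.

Lemma dotv_Omega : dotv (Omega C d) (Omega C d) = 1.
Proof.
rewrite /dotv (eq_bigr (fun p => @diagv C 'I_d p / d%:R)) => [|p _].
  by rewrite -mulr_suml sum_diagv divff.
rewrite /Omega /diagv rmorphM /= conjC_nat fmorphV /= sqrt_d_real.
by case: (_ == _); rewrite ?mul0r ?mul1r // -invfM sqrt_d_sqr.
Qed.

Lemma qform_omega_diagv : qform (omega C d) (@diagv C 'I_d) = d%:R.
Proof. by rewrite qform_proj dotv_diagv_Omega sqrt_d_real sqrt_d_sqr. Qed.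

Lemma qform_idop_sub_omega_diagv :
  qform (subop (@idop C I) (omega C d)) (@diagv C 'I_d) = 0.
Proof.
rewrite qform_sub qform_idop qform_omega_diagv -sum_diagv; apply/eqP.
rewrite subr_eq0; apply/eqP.
apply: eq_bigr => p _; rewrite /diagv conjC_nat.
by case: (p.1 == p.2); rewrite ?mul0r ?mul1r.
Qed.

Lemma ptB_omega x y : ptB (omega C d) x y = (x == swap y)%:R / d%:R.
Proof.
case: x y => a b [a' b']; rewrite /ptB /omega /proj /Omega /swap /= xpair_eqE.
rewrite -mulnb natrM rmorphM /= conjC_nat fmorphV /= sqrt_d_real [b == a']eq_sym.
by rewrite mulrACA -invfM sqrt_d_sqr.
Qed.

Lemma ptB_idop_sub_omega x y : ptB (subop (@idop C I) (omega C d)) x y =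
  (1 - d%:R^-1) * symop swap 1 x y + (1 + d%:R^-1) * symop swap (-1) x y.
Proof.
have := ptB_idop C x y; have := ptB_omega x y; rewrite /ptB /subop => -> ->.
by rewrite /symop /idop; field.
Qed.

Lemma ptB_omega_symop x y :
  ptB (omega C d) x y = (symop swap 1 x y - symop swap (-1) x y) / d%:R.
Proof. by rewrite ptB_omega /symop; field. Qed.

Lemma sum_of_products_symv (e : C) (q : I) : sum_of_products bool (symv swap e q).
Proof.
exists (fun r a => if r then (a == q.1)%:R / 2%:R else e * (a == q.2)%:R / 2%:R).
exists (fun r b => if r then (b == q.2)%:R else (b == q.1)%:R).
move=> a b; rewrite big_bool /symv /swap /=.
by case: q => q1 q2 /=; rewrite !xpair_eqE -!mulnb !natrM; ring.
Qed.

Lemma rank_coefmx_Omega_parallel (f : vec C I) :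
  (forall u, dotv u (Omega C d) = 0 -> dotv u f = 0) ->
  dotv (Omega C d) f != 0 -> \rank (coefmx f) = d.
Proof.
move=> f_perp f_nz.
have f_off a b : a != b -> f (a, b) = 0.
  move=> ab; rewrite -dotv_deltav; apply: f_perp.
  by rewrite dotv_deltav /Omega /= (negbTE ab) mul0r.
have f_diag a b : f (a, a) = f (b, b).
  apply/eqP; rewrite -subr_eq0 -(dotv_deltav (a, a)) -(dotv_deltav (b, b)) -dotvBl.
  by apply/eqP/f_perp; rewrite dotvBl !dotv_deltav /Omega /= !eqxx subrr.
have [a fa] : exists a, f (a, a) != 0.
  apply/existsP; apply: contraR f_nz; rewrite negb_exists => /forallP f0.
  apply/eqP/big1 => -[a b] _; case: (eqVneq a b) => [<-|/f_off ->].
    by rewrite (eqP (negbNE (f0 a))) mulr0.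
  by rewrite mulr0.
have -> : coefmx f = (f (a, a))%:M.
  apply/matrixP => i k; rewrite !mxE; case: (eqVneq i k) => [<-|ik].
    by rewrite mulr1n (f_diag _ a).
  by rewrite mulr0n f_off // (inj_eq enum_val_inj) eq_sym.
by rewrite -scalemx1 mxrank_scale_nz // mxrank1 card_ord.
Qed.

End MaximallyEntangled.

Section Zop.
Variables (C : numClosedFieldType) (d1 d2 : nat).
Hypotheses (d1_gt1 : (1 < d1)%N) (d1_le_d2 : (d1 <= d2)%N).

Let d1_gt0 : (0 < d1)%N. Proof. exact: ltnW. Qed.
Let d2_gt0 : (0 < d2)%N. Proof. exact: leq_trans d1_le_d2. Qed.
Let d1_neq0 : (d1%:R : C) != 0. Proof. by rewrite pnatr_eq0 -lt0n. Qed.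
Let d2_neq0 : (d2%:R : C) != 0. Proof. by rewrite pnatr_eq0 -lt0n. Qed.

Local Notation Z := (Zop C d1 d2).

Definition Zcoef : C := (d1%:R - 1) * (d2%:R + 1).

Lemma Zcoef_natr : Zcoef = ((d1 - 1) * (d2 + 1))%N%:R.
Proof. by rewrite /Zcoef natrM natrB ?natrD. Qed.

Lemma proj_decomp_Zop : proj_decomp (fun _ => True) Z.
Proof.
apply: proj_decomp_add; last apply: proj_decomp_scale => //.
- by apply: proj_decomp_regroup_kron => //; apply: proj_decomp_idop_sub_proj;
    apply: dotv_Omega.
- by rewrite -/Zcoef Zcoef_natr ler0n.
- by apply: proj_decomp_regroup_kron => //; apply: proj_decomp_proj.
Qed.

Definition symkron (e e' : C) :=
  regroup (kron (symop (@swap d1) e) (symop (@swap d2) e')).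

Definition ptZ_weight (e e' : C) : C :=
  (1 - e / d1%:R) * (1 - e' / d2%:R) + Zcoef * (e * e') / (d1%:R * d2%:R).

Lemma ptB_Zop x y : ptB Z x y =
  addop (addop (addop (scaleop (ptZ_weight 1 1) (symkron 1 1))
                      (scaleop (ptZ_weight 1 (-1)) (symkron 1 (-1))))
               (scaleop (ptZ_weight (-1) 1) (symkron (-1) 1)))
        (scaleop (ptZ_weight (-1) (-1)) (symkron (-1) (-1))) x y.
Proof.
rewrite [LHS](_ : _ =
    addop (ptB (regroup (kron (subop (@idop C _) (omega C d1))
                              (subop (@idop C _) (omega C d2)))))
          (scaleop Zcoef (ptB (regroup (kron (omega C d1) (omega C d2))))) x y) //.
rewrite /addop /scaleop !ptB_regroup_kron /symkron /regroup /kron.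
rewrite !ptB_idop_sub_omega // !ptB_omega_symop // /ptZ_weight.
by field; rewrite d1_neq0 d2_neq0.
Qed.

(* [d1 d2 ptZ_weight e e' = (d1 - e) (d2 - e') + e e' (d1 - 1) (d2 + 1)];
   only the weight of [P_- (x) P_+] needs [d1 <= d2] *)
Lemma ptZ_weight_ge0 :
  [/\ 0 <= ptZ_weight 1 1, 0 <= ptZ_weight 1 (-1),
      0 <= ptZ_weight (-1) 1 & 0 <= ptZ_weight (-1) (-1)].
Proof.
split.
- have -> : ptZ_weight 1 1 = (2 * d2 * (d1 - 1))%N%:R / (d1 * d2)%N%:R.
    rewrite /ptZ_weight /Zcoef !natrM natrB 1?ltnW //.
    by field; rewrite d1_neq0 d2_neq0.
  by rewrite divr_ge0 ?ler0n.
- have -> : ptZ_weight 1 (-1) = 0.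
    by rewrite /ptZ_weight /Zcoef; field; rewrite d1_neq0 d2_neq0.
  by [].
- have -> : ptZ_weight (-1) 1 = (2 * (d2 - d1))%N%:R / (d1 * d2)%N%:R.
    rewrite /ptZ_weight /Zcoef !natrM natrB //.
    by field; rewrite d1_neq0 d2_neq0.
  by rewrite divr_ge0 ?ler0n.
- have -> : ptZ_weight (-1) (-1) = (2 * d1 * (d2 + 1))%N%:R / (d1 * d2)%N%:R.
    rewrite /ptZ_weight /Zcoef !natrM natrD.
    by field; rewrite d1_neq0 d2_neq0.
  by rewrite divr_ge0 ?ler0n.
Qed.

Lemma proj_decomp_symkron (e e' : C) :
  e^* = e -> e * e = 1 -> e'^* = e' -> e' * e' = 1 ->
  proj_decomp (sum_of_products (bool * bool)%type) (symkron e e').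
Proof.
move=> e_real e_sqr e'_real e'_sqr.
apply: proj_decomp_regroup_kron (proj_decomp_symop (@swapK d1) e_real e_sqr)
                                (proj_decomp_symop (@swapK d2) e'_real e'_sqr).
by move=> _ _ [q ->] [q' ->]; apply: sum_of_products_tensorv;
  apply: sum_of_products_symv.
Qed.

Lemma proj_decomp_ptB_Zop : proj_decomp (sum_of_products (bool * bool)%type) (ptB Z).
Proof.
have [w11 w12 w21 w22] := ptZ_weight_ge0.
have [conj1 sqr1] : (1 : C)^* = 1 /\ (1 : C) * 1 = 1 by rewrite conjC1 mulr1.
have [conjN1 sqrN1] : (-1 : C)^* = -1 /\ (-1 : C) * -1 = 1.
  by rewrite rmorphN1 mulrNN mulr1.
apply: (eq_proj_decomp ptB_Zop).
by do !apply: proj_decomp_add; apply: proj_decomp_scale => //;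
  first [exact: sum_of_products_scale | exact: proj_decomp_symkron].
Qed.

Lemma qform_Zop_tensorv_diagv u :
  qform Z (tensorv (@diagv C 'I_d1) u) = Zcoef * (d1%:R * qform (omega C d2) u).
Proof.
rewrite [LHS](_ : _ =
    qform (subop (@idop C _) (omega C d1)) (@diagv C 'I_d1) *
    qform (subop (@idop C _) (omega C d2)) u +
    Zcoef * (qform (omega C d1) (@diagv C 'I_d1) * qform (omega C d2) u)).
  by rewrite qform_idop_sub_omega_diagv // qform_omega_diagv // mul0r add0r.
by rewrite -!qform_regroup_kron -qform_scale -qform_add.
Qed.

Lemma SN_decomp_Zop_ge k : SN_decomp Z k -> (d2 <= d1 * k)%N.
Proof.
move=> [n [p [psi [p_gt0 ZE <-]]]].
have Zcoef_neq0 : Zcoef != 0.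
  by rewrite Zcoef_natr pnatr_eq0 muln_eq0 negb_or subn_eq0 -ltnNge d1_gt1 addn1.
have contract_perp i u :
    dotv u (Omega C d2) = 0 -> dotv u (contractv (psi i)) = 0.
  move=> u_perp; rewrite -dotv_tensorv_diagv.
  apply: (dotv_eq0_of_qform_eq0 p_gt0 ZE).
  by rewrite qform_Zop_tensorv_diagv qform_proj u_perp !(mul0r, mulr0).
have Z_Omega : qform Z (tensorv (@diagv C 'I_d1) (Omega C d2)) != 0.
  rewrite qform_Zop_tensorv_diagv qform_proj dotv_Omega // conjC1 mulr1.
  by rewrite mulr1 mulf_neq0.
have [i contract_i] : exists i, dotv (Omega C d2) (contractv (psi i)) != 0.
  have [i0] := exists_dotv_neq0 ZE Z_Omega.
  by exists i0; rewrite -dotv_tensorv_diagv.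
have := rank_coefmx_contractv (psi i).
rewrite (rank_coefmx_Omega_parallel (contract_perp i) contract_i) card_ord.
move/leq_trans; apply; rewrite leq_mul2l -schmidt_rank_coefmx.
by rewrite (leq_bigmax (F := fun i => schmidt_rank (psi i)) i) orbT.
Qed.

End Zop.

Lemma ceil_divn_le (m n k : nat) :
  (0 < n)%N -> (m <= n * k)%N -> Num.ceil (m%:Q / n%:Q) <= k%:Z.
Proof.
move=> n_gt0 m_le; rewrite ceil_le_int ler_pdivrMr ?ltr0n //.
by rewrite -[k%:Z%:~R]/(k%:R : rat) -natrM ler_nat mulnC.
Qed.

Unset Implicit Arguments.
Set Strict Implicit.

Theorem theorem7 (R : realType) (d1 d2 : nat) :
  (2 <= d1)%N -> (d1 <= d2)%N ->
  let Z := Zop (R[i]) d1 d2 in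
  [/\ psd Z, PPT Z, (SN (ptB Z) <= 4)%N &
      Num.ceil (d2%:Q / d1%:Q) - 4 <= (SN Z)%:Z - (SN (ptB Z))%:Z].
Proof.
move=> d1_gt1 d1_le_d2 Z.
have Z_decomp := proj_decomp_Zop (R[i]) d1_gt1 d1_le_d2.
have ZG_decomp := proj_decomp_ptB_Zop (R[i]) d1_gt1 d1_le_d2.
have SN_ZG : (SN (ptB Z) <= 4)%N.
  apply: SN_le_of_proj_decomp ZG_decomp _ => v /schmidt_rank_le_card.
  by rewrite card_prod card_bool.
have SN_Z : Num.ceil (d2%:Q / d1%:Q) <= (SN Z)%:Z.
  apply: ceil_divn_le; first exact: ltnW.
  exact: SN_decomp_Zop_ge d1_gt1 d1_le_d2 _ (SN_decomp_SN Z_decomp).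
split=> //; [exact: psd_of_proj_decomp Z_decomp | exact: psd_of_proj_decomp ZG_decomp |].
have : (SN (ptB Z))%:Z <= 4 by rewrite lez_nat.
lia.
Qed.
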